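(* Consider the ARLOD model on a finite connected graph $G$ with $N\ge 2$ agents, learning rate $\alpha\in(0,1)$, exploration rate $\epsilon\in(0,1)$, and any initial Q-values in $[-1,1]$. Then $$\mathbb{P}\big(\exists\, t_0<\infty,\ \exists\, o\in\{-1,1\}: Q^i_o(t)>Q^i_{-o}(t)\ \ \forall i\in\{1,\dots,N\},\ \forall t\ge t_0\big)=1,$$ i.e. almost surely the system eventually reaches consensus and remains in it forever.
   Context: The ARLOD (asymmetric reinforcement learning for opinion dynamics) model: $G=(V,E)$ is a finite simple undirected graph on vertex set $V=\{1,\dots,N\}$ (agents); $N(i)=\{u:(u,i)\in E\}$ is the neighbourhood of $i$. Each agent $i$ holds two Q-values $Q^i_{1}(t),Q^i_{-1}(t)\in\mathbb{R}$, initialized in $[-1,1]$. The favoured opinion of agent $i$ at time $t$ is $1$ if $Q^i_1(t)\ge Q^i_{-1}(t)$ and $-1$ otherwise. In each discrete round $t$: an agent $i$ is chosen uniformly at random from $V$; $i$ chooses a neighbour $j\in N(i)$ uniformly at random; $i$ expresses an opinion $o_i(t)$, equal to its favoured opinion with probability $1-\epsilon$ and to the other opinion with probability $\epsilon$; $j$ responds with $R_j=1$ if $o_i(t)$ equals $j$'s favoured opinion and $R_j=-1$ otherwise; then only agent $i$ updates, via $Q^i_{o_i(t)}(t+1)=(1-\alpha)Q^i_{o_i(t)}(t)+\alpha R_j$ and $Q^i_{-o_i(t)}(t+1)=Q^i_{-o_i(t)}(t)$. All other agents' Q-values are unchanged in that round. *)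

From HB Require Import structures.
From mathcomp Require Import all_boot all_order all_algebra.
From mathcomp Require Import all_classical all_reals all_analysis.
Set Implicit Arguments. Unset Strict Implicit. Unset Printing Implicit Defensive.
Import Order.TTheory GRing.Theory Num.Theory.
Local Open Scope ring_scope.

(* Opinions: true = opinion 1,
   false = opinion -1.  A Q-table is a function agent -> opinion -> R.
   The random input of round t is the triple (i, j, b): i the chosen agent,
   j the chosen neighbour, b = true iff i explores (expresses the
   non-favoured opinion). *)

Definition arlod_input (N : nat) := ('I_N * 'I_N * bool)%type.

Definition favoured (R : realType) (N : nat) (Q : 'I_N -> bool -> R) (i : 'I_N)
  : bool := Q i false <= Q i true.

Definition arlod_update (R : realType) (N : nat) (alpha : R)
  (Q : 'I_N -> bool -> R) (x : arlod_input N) : 'I_N -> bool -> R :=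
  let: (i, j, b) := x in
  let o := if b then ~~ favoured Q i else favoured Q i in
  let r : R := if o == favoured Q j then 1 else -1 in
  fun k p => if (k == i) && (p == o) then (1 - alpha) * Q k p + alpha * r
             else Q k p.

Fixpoint arlod_Q (R : realType) (N : nat) (alpha : R) (Q0 : 'I_N -> bool -> R)
  (xs : nat -> arlod_input N) (t : nat) : 'I_N -> bool -> R :=
  match t with
  | 0 => Q0
  | t'.+1 => arlod_update alpha (arlod_Q alpha Q0 xs t') (xs t')
  end.

Definition arlod_input_prob (R : realType) (N : nat) (adj : rel 'I_N) (eps : R)
  (x : arlod_input N) : R :=
  let: (i, j, b) := x in
  N%:R^-1 * (if adj i j then (#|[set k | adj i k]|%:R)^-1 else 0)
  * (if b then eps else 1 - eps).

From HB Require Import structures.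
From mathcomp Require Import all_boot all_order all_algebra.
From mathcomp Require Import all_classical all_reals all_analysis.
From mathcomp Require Import zify ring lra.
Set Implicit Arguments. Unset Strict Implicit. Unset Printing Implicit Defensive.
Import Order.TTheory GRing.Theory Num.Theory.
Local Open Scope classical_set_scope.
Local Open Scope ring_scope.

(* Q-values stay in [-1, 1], and consensus on an opinion o (every agent has
   Q_o > Q_{-o}) is absorbing: whoever speaks is rewarded for o or punished for
   -o, which only widens its gap.  From any such state consensus can be reached
   in K = 2 m N rounds along edges of the graph: while some agent k does not
   strictly favour 1, pick one next to an agent j favouring 1 and let k say 1
   to j m times, then -1 m times; once 2 (1 - alpha)^m < 1 this makes k strictly
   favour 1 and changes nobody else (if nobody favours 1, all agents already
   agree on -1).  Each of these rounds has probability at least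
   eps (1 - eps) / N^2, so whatever happened before, the next K rounds reach
   consensus with probability at least delta > 0, and consensus is still
   missing after n blocks with probability at most (1 - delta)^n. *)

Section Trajectory.
Variables (S I : Type) (f : S -> I -> S).

Fixpoint trajectory (s : S) (xs : nat -> I) (t : nat) : S :=
  if t is t'.+1 then f (trajectory s xs t') (xs t') else s.

Lemma eq_trajectory s xs ys t :
  (forall u, (u < t)%N -> xs u = ys u) -> trajectory s xs t = trajectory s ys t.
Proof.
elim: t => [|t IH] //= xy; rewrite IH ?xy // => u ut; apply: xy; exact: ltnW.
Qed.

Lemma trajectoryD s xs m k :
  trajectory s xs (m + k) = trajectory (trajectory s xs m) (fun t => xs (m + t)%N) k.
Proof. by elim: k => [|k IH]; rewrite ?addn0 // addnS /= IH. Qed.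

Lemma trajectory_inv (Inv : S -> Prop) s xs t :
  (forall s x, Inv s -> Inv (f s x)) -> Inv s -> Inv (trajectory s xs t).
Proof. by move=> closed s_inv; elim: t => //= t; apply: closed. Qed.

Lemma trajectory_absorbing (Inv A : S -> Prop) s xs t :
  (forall s x, Inv s -> Inv (f s x)) -> (forall s x, Inv s -> A s -> A (f s x)) ->
  Inv s -> A s -> A (trajectory s xs t).
Proof.
move=> Inv_f A_f Inv_s A_s; suff [] : Inv (trajectory s xs t) /\ A (trajectory s xs t) by [].
apply: (@trajectory_inv (fun s => Inv s /\ A s)) => // s' x [Inv_s' A_s'].
by split; [apply: Inv_f | apply: A_f].
Qed.

Definition reachable (ok : pred I) (s : S) (k : nat) (A : S -> Prop) :=
  exists2 xs : nat -> I, forall t, (t < k)%N -> ok (xs t) & A (trajectory s xs k).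

Variable ok : pred I.

Lemma reachable0 (x : I) s (A : S -> Prop) : A s -> reachable ok s 0 A.
Proof. by exists (fun=> x). Qed.

Lemma reachable1 x s (A : S -> Prop) : ok x -> A (f s x) -> reachable ok s 1 A.
Proof. by exists (fun=> x). Qed.

Lemma reachable_cat s k1 k2 (A B : S -> Prop) :
  reachable ok s k1 A -> (forall s', A s' -> reachable ok s' k2 B) ->
  reachable ok s (k1 + k2) B.
Proof.
move=> [xs xs_ok /[swap] /[apply] [[ys ys_ok B_end]]].
exists (fun t => if (t < k1)%N then xs t else ys (t - k1)%N).
  by move=> t t_lt; case: ifP => t_k1; [apply: xs_ok | apply: ys_ok; lia].
rewrite trajectoryD (@eq_trajectory s _ xs k1); last by move=> u ->.
rewrite (@eq_trajectory _ _ ys) // => u _.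
by rewrite ifN ?addKn //; lia.
Qed.

Lemma reachable_mono s k (A B : S -> Prop) :
  (forall s', A s' -> B s') -> reachable ok s k A -> reachable ok s k B.
Proof. by move=> AB [xs xs_ok /AB]; exists xs. Qed.

Lemma reachable_inv (Inv : S -> Prop) s k (A : S -> Prop) :
  (forall s x, Inv s -> Inv (f s x)) -> Inv s ->
  reachable ok s k A -> reachable ok s k (fun s' => A s' /\ Inv s').
Proof.
move=> Inv_f Inv_s [xs xs_ok A_end]; exists xs => //.
by split => //; apply: trajectory_inv.
Qed.

Lemma reachable_stay (y : I) (Inv A : S -> Prop) s k :
  ok y -> (forall s x, Inv s -> Inv (f s x)) -> (forall s x, Inv s -> A s -> A (f s x)) ->
  Inv s -> A s -> reachable ok s k A.
Proof.
move=> ok_y Inv_f A_f Inv_s A_s; exists (fun=> y) => //.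
exact: trajectory_absorbing Inv_f A_f Inv_s A_s.
Qed.

End Trajectory.

Lemma exists_expr_lt (R : realType) (r e : R) : 0 <= r < 1 -> 0 < e ->
  exists n, r ^+ n < e.
Proof.
move=> /andP[r0 r1] e0.
have r_cvg : (GRing.exp r : R ^nat) @ \oo --> 0 by apply: cvg_expr; rewrite ger0_norm.
by have [n _ /(_ n (leqnn n))] := cvgr_lt _ r_cvg _ e0; exists n.
Qed.

Lemma measure_bigsetU_fin d (T : measurableType d) (R : realType)
    (mu : {measure set T -> \bar R}) (I : finType) (q : pred I) (F : I -> set T) :
  (forall i, measurable (F i)) -> trivIset setT F ->
  mu (\big[setU/set0]_(i | q i) F i) = (\sum_(i | q i) mu (F i))%E.
Proof.
move=> mF tF.
have reindex V (op : SemiGroup.com_law V) (v : V) (G : I -> V) :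
  \big[op/v]_(i | q i) G i = \big[op/v]_(k < #|I| | q (enum_val k)) G (enum_val k).
  by rewrite -big_enum_val_cond; apply: eq_bigl.
rewrite !reindex measure_bigsetU_ord_cond // => i j _ _ Fij.
by apply: enum_val_inj; apply: tF.
Qed.

Definition history (T I : Type) (X : nat -> T -> I) (n : nat) (w : T) :
  {ffun 'I_n -> I} := [ffun t : 'I_n => X t w].

Definition padded (I : Type) (x0 : I) n (h : {ffun 'I_n -> I}) (t : nat) : I :=
  oapp h x0 (insub t).

Lemma padded_ord (I : Type) (x0 : I) n (h : {ffun 'I_n -> I}) (t : 'I_n) :
  padded x0 h t = h t.
Proof. by rewrite /padded valK. Qed.

Lemma history_eqP (T I : Type) (X : nat -> T -> I) x0 n w h :
  history X n w = h <-> forall t, (t < n)%N -> X t w = padded x0 h t.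
Proof.
split=> [<- t t_n|Xh]; first by rewrite (padded_ord _ _ (Ordinal t_n)) ffunE.
by apply/ffunP => t; rewrite ffunE Xh // padded_ord.
Qed.

Lemma history_pred_bigsetU (T : Type) (I : finType) (X : nat -> T -> I) n
    (q : pred {ffun 'I_n -> I}) :
  [set w | q (history X n w)] = \big[setU/set0]_(h | q h) [set w | history X n w = h].
Proof.
rewrite -bigcup_seq_cond; apply/seteqP; split=> [w qw|w [h /andP[_ qh] /= ->]] //.
by exists (history X n w); rewrite /= ?mem_index_enum.
Qed.

Section Absorption.
Variables (R : realType) (d : measure_display) (Omega : measurableType d).
Variables (P : probability Omega R) (I : finType) (p : I -> R).
Variables (X : nat -> Omega -> I) (x0 : I).

Hypothesis X_measurable : forall t x, measurable (X t @^-1` [set x]).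

Definition cylinder m n (xs : nat -> I) :=
  [set w | forall t, (t < n)%N -> X (m + t)%N w = xs t].

Hypothesis P_cylinder : forall n xs,
  P (cylinder 0 n xs) = (\prod_(t < n) p (xs t))%:E.

Lemma measurable_cylinder m n xs : measurable (cylinder m n xs).
Proof.
rewrite [E in measurable E](_ : _ =
    \bigcap_(t in [set t | (t < n)%N]) X (m + t)%N @^-1` [set xs t]).
  by apply: bigcap_measurableType => t _; apply: X_measurable.
by apply/seteqP; split=> w /= Xw t; apply: Xw.
Qed.

Lemma history_cylinder n h : [set w | history X n w = h] = cylinder 0 n (padded x0 h).
Proof. by apply/seteqP; split=> w /= /(history_eqP _ x0). Qed.

Lemma P_history n h :
  P [set w | history X n w = h] = (\prod_(t < n) p (h t))%:E.
Proof.
by rewrite history_cylinder P_cylinder; under eq_bigr do rewrite padded_ord.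
Qed.

Lemma measurable_history n (q : pred {ffun 'I_n -> I}) :
  measurable [set w | q (history X n w)].
Proof.
rewrite history_pred_bigsetU; apply: bigsetU_measurable => h _.
by rewrite history_cylinder; apply: measurable_cylinder.
Qed.

Lemma P_history_pred n (q : pred {ffun 'I_n -> I}) :
  P [set w | q (history X n w)] = (\sum_(h | q h) \prod_(t < n) p (h t))%:E.
Proof.
rewrite history_pred_bigsetU measure_bigsetU_fin.
- by rewrite -sumEFin; apply: eq_bigr => h _; apply: P_history.
- by move=> h; rewrite history_cylinder; apply: measurable_cylinder.
by move=> h h' _ _ [w [/= <- <-]].
Qed.

Lemma history_setI_cylinder M K h xs :
  [set w | history X M w = h] `&` cylinder M K xs =
  cylinder 0 (M + K) (fun t => if (t < M)%N then padded x0 h t else xs (t - M)%N).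
Proof.
apply/seteqP; split=> w; rewrite /cylinder.
  move=> [/(history_eqP _ x0) Xh Xxs] t tMK; rewrite add0n; case: ifP => tM.
    exact: Xh.
  have Mt : (M <= t)%N by rewrite leqNgt tM.
  by have := Xxs (t - M)%N; rewrite subnKC //; apply; lia.
move=> Xys; split.
  by apply/(history_eqP _ x0) => t tM; have := Xys t; rewrite tM; apply; lia.
by move=> t tK; have := Xys (M + t)%N; rewrite ifN ?addKn //; [apply; lia | lia].
Qed.

Lemma P_history_setD_cylinder M K h xs :
  P ([set w | history X M w = h] `\` cylinder M K xs) =
  ((1 - \prod_(t < K) p (xs t)) * \prod_(t < M) p (h t))%:E.
Proof.
have measurable_history_eq : measurable [set w | history X M w = h].
  by rewrite history_cylinder; apply: measurable_cylinder.
have P_setD : P ([set w | history X M w = h] `\` cylinder M K xs) =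
    (P [set w | history X M w = h] - P ([set w | history X M w = h] `&` cylinder M K xs))%E.
  apply: measureD => //; first exact: measurable_cylinder.
  by apply: (le_lt_trans (probability_le1 P measurable_history_eq)); rewrite ltry.
have P_setI : P ([set w | history X M w = h] `&` cylinder M K xs) =
    (\prod_(t < M) p (h t) * \prod_(t < K) p (xs t))%:E.
  rewrite history_setI_cylinder P_cylinder big_split_ord /=.
  congr (_ * _)%:E; apply: eq_bigr => t _; first by rewrite ltn_ord padded_ord.
  by rewrite ifN ?addKn //; lia.
by rewrite P_setD P_setI P_history -EFinB; congr (_%:E); ring.
Qed.

Variables (S : Type) (f : S -> I -> S) (s0 : S) (Inv : S -> Prop) (A : pred S).
Variables (ok : pred I) (c : R) (K : nat).

Hypothesis Inv_s0 : Inv s0.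
Hypothesis Inv_f : forall s x, Inv s -> Inv (f s x).
Hypothesis A_f : forall s x, Inv s -> A s -> A (f s x).
Hypothesis c_gt0 : 0 < c.
Hypothesis p_ok : forall x, ok x -> c <= p x.
Hypothesis A_reachable : forall s, Inv s -> reachable f ok s K (fun s' => A s').

Let run w := trajectory f s0 (X^~ w).
Let state n (h : {ffun 'I_n -> I}) := trajectory f s0 (padded x0 h) n.

Lemma exprK_le_prod xs :
  (forall t, (t < K)%N -> ok (xs t)) -> c ^+ K <= \prod_(t < K) p (xs t).
Proof.
move=> xs_ok; have -> : c ^+ K = \prod_(t < K) c by rewrite prodr_const card_ord.
by apply: ler_prod => t _; rewrite (ltW c_gt0) p_ok ?xs_ok.
Qed.

Lemma exprK_le1 : c ^+ K <= 1.
Proof.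
have [xs xs_ok _] := A_reachable Inv_s0.
apply: le_trans (exprK_le_prod xs_ok) _; rewrite -lee_fin -P_cylinder.
by apply: probability_le1; apply: measurable_cylinder.
Qed.

Lemma run_history n w : run w n = state (history X n w).
Proof. by apply: eq_trajectory; apply/(history_eqP _ x0). Qed.

Lemma run_event n (q : pred S) :
  [set w | q (run w n)] = [set w | q (state (history X n w))].
Proof. by apply/seteqP; split=> w /=; rewrite run_history. Qed.

Lemma measurable_run_event n (q : pred S) : measurable [set w | q (run w n)].
Proof. by rewrite run_event; apply: (@measurable_history _ (fun h => q (state h))). Qed.

Lemma absorbing_paths : {g : S -> nat -> I & forall s, Inv s ->
  (forall t, (t < K)%N -> ok (g s t)) /\ A (trajectory f s (g s) K)}.
Proof.
apply: (boolp.choice (P := fun s xs => Inv s ->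
  (forall t, (t < K)%N -> ok (xs t)) /\ A (trajectory f s xs K))) => s.
have [/A_reachable [xs xs_ok Axs]|not_Inv] := pselect (Inv s); first by exists xs.
by exists (fun=> x0) => /not_Inv.
Qed.

Lemma P_not_absorbed_step M :
  (P [set w | ~~ A (run w (M + K))] <= (1 - c ^+ K)%:E * P [set w | ~~ A (run w M)])%E.
Proof.
have [g g_reach] := absorbing_paths.
(* Whatever the first M inputs h were, missing consensus at time M + K forces
   the next K inputs off the path g (state h), which has probability >= c ^+ K. *)
pose F h := [set w | history X M w = h] `\` cylinder M K (g (state h)).
have Inv_run w t : Inv (run w t) by apply: trajectory_inv.
have cover : [set w | ~~ A (run w (M + K))] `<=` \big[setU/set0]_(h | ~~ A (state h)) F h.
  move=> w /= notA; rewrite -bigcup_seq_cond; exists (history X M w) => /=.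
    rewrite mem_index_enum -run_history; apply: contra notA => Arun.
    by rewrite /run trajectoryD; apply: trajectory_absorbing Inv_f A_f (Inv_run w M) Arun.
  split=> // block; move: notA; rewrite /run trajectoryD.
  have [_ A_g] := g_reach _ (Inv_run w M).
  rewrite (@eq_trajectory _ _ _ _ _ (g (run w M))) => [/negP[]|t tK]; first exact: A_g.
  by rewrite run_history; apply: block.
have measurable_F h : measurable (F h).
  apply: measurableD; last exact: measurable_cylinder.
  by rewrite history_cylinder; apply: measurable_cylinder.
have P_cover : (P [set w | ~~ A (run w (M + K))] <=
    P (\big[setU/set0]_(h | ~~ A (state h)) F h))%E.
  apply: le_measure cover; rewrite inE; last by apply: bigsetU_measurable => h _.
  exact: (measurable_run_event _ (fun s => ~~ A s)).
have P_union : P (\big[setU/set0]_(h | ~~ A (state h)) F h) =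
    (\sum_(h | ~~ A (state h)) P (F h))%E.
  by apply: measure_bigsetU_fin => // h h' _ _ [w [[/= <- _] [/= <- _]]].
apply: le_trans P_cover _; rewrite P_union.
rewrite (run_event _ (fun s => ~~ A s)) (@P_history_pred M (fun h => ~~ A (state h))).
rewrite -EFinM mulr_sumr -sumEFin; apply: lee_sum => h _.
rewrite /F P_history_setD_cylinder lee_fin ler_wpM2r //.
  have : (0 <= P [set w | history X M w = h])%E by apply: measure_ge0.
  by rewrite P_history lee_fin.
have [g_ok _] := g_reach _ (trajectory_inv (padded x0 h) M Inv_f Inv_s0).
by rewrite lerB // exprK_le_prod.
Qed.

Lemma P_not_absorbed n : (P [set w | ~~ A (run w (n * K))] <= ((1 - c ^+ K) ^+ n)%:E)%E.
Proof.
elim: n => [|n IH].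
  by rewrite expr0; apply: probability_le1; apply: (measurable_run_event _ (fun s => ~~ A s)).
rewrite mulSnr exprS EFinM; apply: le_trans (P_not_absorbed_step _) _.
by apply: lee_wpmul2l => //; rewrite lee_fin subr_ge0 exprK_le1.
Qed.

Theorem absorbed_almost_surely : P [set w | exists t, A (run w t)] = 1%E.
Proof.
have measurable_hit : measurable [set w | exists t, A (run w t)].
  rewrite [E in measurable E](_ : _ = \bigcup_t [set w | A (run w t)]).
    by apply: bigcupT_measurable => t; apply: (measurable_run_event _ (fun s => A s)).
  by apply/seteqP; split=> w; [case=> t At | case=> t _ At]; exists t.
have P_miss : P (~` [set w | exists t, A (run w t)]) = 0%E.
  apply/eqP; rewrite eq_le measure_ge0 andbT; apply/lee_addgt0Pr => e e_gt0.
  have decay01 : 0 <= 1 - c ^+ K < 1 by rewrite subr_ge0 exprK_le1 gtrDl oppr_lt0 exprn_gt0.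
  have [n decay_n] := exists_expr_lt decay01 e_gt0.
  apply: (le_trans _ (le_trans (P_not_absorbed n) _)); last by rewrite add0e lee_fin ltW.
  apply: le_measure; rewrite ?inE; [exact: measurableC | | ].
    exact: (measurable_run_event _ (fun s => ~~ A s)).
  by move=> w miss; apply/negP => A_n; apply: miss; exists (n * K)%N.
by have := probability_setC P (measurableC measurable_hit); rewrite setCK P_miss sube0.
Qed.

End Absorption.

Lemma connect_cross (T : finType) (e : rel T) (q : pred T) a b :
  connect e a b -> q a -> ~~ q b -> exists x y, [/\ e x y, q x & ~~ q y].
Proof.
move=> /connectP [s path_s ->] {b}.
elim: s a path_s => [|y s IH] a /=; first by move=> _ ->.
case/andP=> e_ay path_s qa not_q_last.
have [qy|not_qy] := boolP (q y); first exact: IH path_s qy not_q_last.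
by exists a, y.
Qed.

Lemma connect_neighbour (T : finType) (e : rel T) :
  (1 < #|T|)%N -> (forall a b, connect e a b) -> forall a, exists b, e a b.
Proof.
move=> /card_gt1P [x [y [_ _ xy]]] e_connected a.
have [b ab] : exists b, b != a.
  by case: (eqVneq x a) => [<-|]; [exists y; rewrite eq_sym | exists x].
have [u [v [e_uv /eqP <- _]]] := connect_cross (q := pred1 a) (e_connected a b) (eqxx a) ab.
by exists v.
Qed.

Section ARLOD.
Variables (R : realType) (N : nat) (alpha : R).
Hypothesis alpha01 : 0 < alpha < 1.

Local Notation qtable := ('I_N -> bool -> R).

Definition bounded (Q : qtable) := forall i o, -1 <= Q i o <= 1.

Definition consensus_on (Q : qtable) (o : bool) := [forall i, Q i (~~ o) < Q i o].

Definition consensus (Q : qtable) := [exists o, consensus_on Q o].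

Definition strictly_favoured (Q : qtable) : pred 'I_N := [pred a | Q a false < Q a true].

Lemma arlod_Q_trajectory (Q0 : qtable) xs t :
  arlod_Q alpha Q0 xs t = trajectory (arlod_update alpha) Q0 xs t.
Proof. by elim: t => //= t ->. Qed.

Lemma arlod_update_bounded Q x : bounded Q -> bounded (arlod_update alpha Q x).
Proof.
case: x => [[i j] b] Q_bounded k q /=; case: ifP => _; last exact: Q_bounded.
have /andP[? ?] := Q_bounded k q; case/andP: alpha01 => ? ?.
by case: ifP => _; apply/andP; split; nra.
Qed.

Lemma favoured_consensus_on (Q : qtable) o k : consensus_on Q o -> favoured Q k = o.
Proof.
by move/forallP/(_ k); rewrite /favoured; case: o => /= Qk; [apply: ltW | rewrite leNgt Qk].
Qed.

Lemma arlod_update_consensus_on Q x o :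
  bounded Q -> consensus_on Q o -> consensus_on (arlod_update alpha Q x) o.
Proof.
case: x => [[i j] b] Q_bounded Q_o; apply/forallP => k /=.
rewrite !(favoured_consensus_on _ Q_o).
move: (forallP Q_o k) (Q_bounded k o) (Q_bounded k (~~ o)) => {Q_o}.
case/andP: alpha01 => ? ?.
by case: b; case: o => /= ? /andP[? ?] /andP[? ?]; case: (k == i) => /=; nra.
Qed.

Lemma arlod_update_consensus Q x :
  bounded Q -> consensus Q -> consensus (arlod_update alpha Q x).
Proof.
move=> Q_bounded /existsP[b Q_b].
by apply/existsP; exists b; apply: arlod_update_consensus_on.
Qed.

Lemma arlod_update_express (Q : qtable) k j o a q :
  arlod_update alpha Q (k, j, o (+) favoured Q k) a q =
  if (a == k) && (q == o)
  then (1 - alpha) * Q k o + alpha * (if o == favoured Q j then 1 else -1)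
  else Q a q.
Proof.
rewrite /arlod_update /=.
have -> : (if o (+) favoured Q k then ~~ favoured Q k else favoured Q k) = o.
  by case: o; case: favoured.
by case: andP => // [[/eqP -> /eqP ->]].
Qed.

Lemma eventually_consensus_onE Q0 xs : bounded Q0 ->
  (exists t0 o, forall t, (t0 <= t)%N -> forall i,
     arlod_Q alpha Q0 xs t i (~~ o) < arlod_Q alpha Q0 xs t i o) <->
  exists t, consensus (trajectory (arlod_update alpha) Q0 xs t).
Proof.
move=> Q0_bounded; split=> [[t0 [b Q_b]]|[t0 /existsP[b Q_b]]].
  by exists t0; apply/existsP; exists b; apply/forallP => i; rewrite -arlod_Q_trajectory Q_b.
exists t0, b => t t0_le_t i; rewrite arlod_Q_trajectory -(subnKC t0_le_t) trajectoryD.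
apply/forallP: i; rewrite -/(consensus_on _ b).
apply: (trajectory_absorbing (A := consensus_on^~ b) _ _ arlod_update_bounded).
- by move=> Q x; apply: arlod_update_consensus_on.
- exact: trajectory_inv arlod_update_bounded Q0_bounded.
exact: Q_b.
Qed.

Variable adj : rel 'I_N.
Hypothesis adj_irr : irreflexive adj.
Hypothesis adj_connected : forall i j, connect adj i j.
Hypothesis N_gt1 : (1 < N)%N.

Definition edge_input : pred (arlod_input N) := fun x => adj x.1.1 x.1.2.

Local Notation reachable := (reachable (arlod_update alpha) edge_input).

Lemma exists_neighbour k : exists j, adj k j.
Proof. by apply: connect_neighbour; rewrite ?card_ord. Qed.

Lemma exists_edge_input : exists x, edge_input x.
Proof.
have [j adj_j] := exists_neighbour (Ordinal (ltnW N_gt1)).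
by exists (Ordinal (ltnW N_gt1), j, false).
Qed.

Lemma reach_stay_consensus Q k :
  bounded Q -> consensus Q -> reachable Q k (fun Q' => consensus Q').
Proof.
have [x0 edge_x0] := exists_edge_input.
exact: reachable_stay edge_x0 arlod_update_bounded arlod_update_consensus.
Qed.

Lemma reach_express_repeatedly (Q : qtable) k j o m : adj k j ->
  let r : R := if o == favoured Q j then 1 else -1 in
  reachable Q m (fun Q' => Q' k o = r + (1 - alpha) ^+ m * (Q k o - r) /\
                           forall a q, (a, q) != (k, o) -> Q' a q = Q a q).
Proof.
move=> kj r; have j_ne_k : (j == k) = false.
  by apply: negbTE; apply: contraTneq kj => ->; rewrite adj_irr.
elim: m => [|m IH]; first by apply: (reachable0 _ _ (k, j, false)); split => //; ring.
rewrite -addn1; apply: (reachable_cat IH) => Q1 [Q1_k Q1_rest].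
have fav_j : favoured Q1 j = favoured Q j.
  by rewrite /favoured !Q1_rest // xpair_eqE j_ne_k.
apply: (@reachable1 _ _ _ _ (k, j, o (+) favoured Q1 k)) => //; split.
  by rewrite arlod_update_express !eqxx fav_j -/r Q1_k addn1 exprS; ring.
by move=> a q aq; rewrite arlod_update_express -Q1_rest // ifN // -xpair_eqE.
Qed.

Variable m : nat.
Hypothesis m_contracts : 2 * (1 - alpha) ^+ m < 1.

Lemma reach_strictly_favoured Q k j :
  bounded Q -> adj k j -> favoured Q j ->
  reachable Q (m + m) (fun Q' => strictly_favoured Q' k /\
                                 forall a, a != k -> forall q, Q' a q = Q a q).
Proof.
move=> Q_bounded kj fav_j.
have j_ne_k : (j == k) = false.
  by apply: negbTE; apply: contraTneq kj => ->; rewrite adj_irr.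
apply: (reachable_cat (reach_express_repeatedly Q true m kj)) => Q1 [Q1_k Q1_rest].
have fav1_j : favoured Q1 j by rewrite /favoured !Q1_rest // xpair_eqE j_ne_k.
apply: reachable_mono (reach_express_repeatedly Q1 false m kj) => Q2 [Q2_k Q2_rest]; split.
  rewrite /strictly_favoured /= Q2_k Q2_rest ?xpair_eqE ?eqxx //.
  rewrite Q1_rest ?xpair_eqE ?eqxx // Q1_k fav1_j fav_j /=.
  (* Q2 k true >= 1 - 2 b and Q2 k false <= -1 + 2 b, where b = (1 - alpha) ^+ m. *)
  have /andP[? ?] := Q_bounded k true; have /andP[? ?] := Q_bounded k false.
  have : 0 <= (1 - alpha) ^+ m by apply: exprn_ge0; case/andP: alpha01 => _; lra.
  move: m_contracts; set b := (1 - alpha) ^+ m; nra.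
by move=> a a_ne_k q; rewrite Q2_rest ?Q1_rest // xpair_eqE (negbTE a_ne_k).
Qed.

Lemma exists_edge_to_favoured (Q : qtable) k0 :
  (exists a, favoured Q a) -> ~~ strictly_favoured Q k0 ->
  exists k j, [/\ adj k j, ~~ strictly_favoured Q k & favoured Q j].
Proof.
move=> [a fav_a] k0_weak.
have [all_fav|/forallPn [b not_fav_b]] := boolP [forall i, favoured Q i].
  by have [j k0j] := exists_neighbour k0; exists k0, j; split => //; apply: forallP.
have not_not_fav_a : ~~ ~~ favoured Q a by rewrite negbK.
have [k [j [kj not_fav_k fav_j]]] :=
  connect_cross (q := fun i => ~~ favoured Q i) (adj_connected b a) not_fav_b not_not_fav_a.
exists k, j; split => //; last by rewrite negbK in fav_j.
by apply/negP => /ltW k_fav; rewrite /favoured k_fav in not_fav_k.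
Qed.

Lemma reach_consensus_from_favoured n Q :
  bounded Q -> (exists a, favoured Q a) ->
  (#|[predC strictly_favoured Q]| <= n)%N ->
  reachable Q (n * (m + m)) (fun Q' => consensus Q').
Proof.
elim: n Q => [|n IH] Q Q_bounded fav_Q weak_le;
  have [all_strict|/forallPn [k0 k0_weak]] := boolP [forall a, strictly_favoured Q a];
  try by apply: reach_stay_consensus => //; apply/existsP; exists true.
  by move: weak_le; rewrite leqn0 => /eqP /card0_eq /(_ k0); rewrite inE k0_weak.
have [k [j [kj k_weak fav_j]]] := exists_edge_to_favoured fav_Q k0_weak.
rewrite mulSn; apply: (reachable_cat (reachable_inv arlod_update_bounded Q_bounded
  (reach_strictly_favoured Q_bounded kj fav_j))) => Q1 [[k_strict Q1_rest] Q1_bounded].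
apply: IH => //; first by exists k; apply: ltW.
rewrite -ltnS; apply: leq_trans weak_le; apply: proper_card; apply/properP; split.
  apply/fintype.subsetP => a; rewrite !inE.
  have [->|a_ne_k] := eqVneq a k; first by move/negP/(_ k_strict).
  by rewrite /strictly_favoured /= !Q1_rest.
by exists k => //; rewrite inE negbK.
Qed.

Lemma reach_consensus Q :
  bounded Q -> reachable Q (N * (m + m)) (fun Q' => consensus Q').
Proof.
move=> Q_bounded; have [/existsP fav|/existsPn not_fav] := boolP [exists a, favoured Q a].
  by apply: reach_consensus_from_favoured => //; rewrite (leq_trans (max_card _)) ?card_ord.
apply: reach_stay_consensus => //; apply/existsP; exists false; apply/forallP => i /=.
by rewrite ltNge not_fav.
Qed.

End ARLOD.

Lemma arlod_input_prob_ge (R : realType) N (adj : rel 'I_N) (eps : R) :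
  0 < eps < 1 -> forall x, edge_input adj x ->
  N%:R^-1 * N%:R^-1 * (eps * (1 - eps)) <= arlod_input_prob adj eps x.
Proof.
move=> /andP[eps_gt0 eps_lt1] [[i j] b]; rewrite /edge_input /= => adj_ij; rewrite adj_ij.
have deg_gt0 : (0 < #|[set k | adj i k]%SET|)%N by apply/card_gt0P; exists j; rewrite inE.
have deg_le : (#|[set k | adj i k]%SET| <= N)%N by rewrite (leq_trans (max_card _)) ?card_ord.
have invN_ge0 : 0 <= (N%:R : R)^-1 by rewrite invr_ge0 ler0n.
have invN_le : (N%:R : R)^-1 <= (#|[set k | adj i k]%SET|%:R)^-1.
  by rewrite lef_pV2 ?posrE ?ltr0n ?ler_nat // (leq_trans deg_gt0).
have speak_ge : eps * (1 - eps) <= (if b then eps else 1 - eps) by case: b; nra.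
by apply: ler_pM; [exact: mulr_ge0 | nra | exact: ler_wpM2l | exact: speak_ge].
Qed.

Theorem theorem1 (R : realType) (d : measure_display) (Omega : measurableType d)
  (P : probability Omega R) (N : nat) (adj : rel 'I_N) (alpha eps : R)
  (Q0 : 'I_N -> bool -> R) (X : nat -> Omega -> arlod_input N) :
  (2 <= N)%N ->
  symmetric adj -> irreflexive adj -> (forall i j, connect adj i j) ->
  0 < alpha < 1 -> 0 < eps < 1 ->
  (forall i o, -1 <= Q0 i o <= 1) ->
  (forall t (x : arlod_input N), measurable (X t @^-1` [set x])) ->
  (forall (n : nat) (x : nat -> arlod_input N),
      P [set w | forall t, (t < n)%N -> X t w = x t]
      = (\prod_(t < n) arlod_input_prob adj eps (x t))%:E) ->
  P [set w | exists t0 : nat, exists o : bool, forall t : nat, (t0 <= t)%N ->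
       forall i : 'I_N,
         arlod_Q alpha Q0 (fun s => X s w) t i (~~ o)
         < arlod_Q alpha Q0 (fun s => X s w) t i o] = 1%E.
Proof.
move=> N_gt1 _ adj_irr adj_connected alpha01 eps01 Q0_bounded X_measurable P_cylinder.
have [m m_contracts] : exists m, 2 * (1 - alpha) ^+ m < 1.
  have [|//|m ?] := @exists_expr_lt R (1 - alpha) 2^-1; last by exists m; lra.
  by apply/andP; split; lra.
have [x0 _] := exists_edge_input adj_connected N_gt1.
have N_gt0 : 0 < N%:R :> R by rewrite ltr0n ltnW.
have c_gt0 : 0 < N%:R^-1 * N%:R^-1 * (eps * (1 - eps)) :> R.
  by rewrite !mulr_gt0 ?invr_gt0 //; nra.
rewrite [E in P E](_ : _ =
    [set w | exists t, consensus (trajectory (arlod_update alpha) Q0 (X^~ w) t)]).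
  exact: (absorbed_almost_surely (p := arlod_input_prob adj eps) x0 X_measurable P_cylinder
    Q0_bounded (arlod_update_bounded alpha01) (arlod_update_consensus alpha01) c_gt0
    (arlod_input_prob_ge eps01)
    (reach_consensus alpha01 adj_irr adj_connected N_gt1 m_contracts)).
by apply/seteqP; split=> w /eventually_consensus_onE; apply.
Qed.
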